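(* Let $F_\infty$ be the free group on countably many generators $a_1,a_2,\dots$, and let $T$ be its Cayley graph with respect to $\{a_i\}$ (vertices: reduced words; $t$ adjacent to $ta_i^{\pm1}$), a tree rooted at the empty word $\emptyset$. For $t\ne\emptyset$ let $\hat t$ be the word obtained by deleting the last letter of $t$. Let $G=\mathrm{Aut}(T)$ be the group of graph automorphisms of $T$, acting on $\mathbb C^T$ (and on $\ell_1(T),\ell_2(T)$) by $u(g)x=(x(g^{-1}t))_{t\in T}$. Define $R:\ell_2(T)\to\ell_\infty(T)$ by $(Rx)(s)=x(\hat s)$ for $s\neq\emptyset$, $(Rx)(\emptyset)=0$, and $L:\ell_1(T)\to\ell_1(T)$ by $Le_t=e_{\hat t}$ for $t\ne\emptyset$, $Le_\emptyset=0$. Then: (1) there is no linear map $\Lambda:\ell_2(T)\to\mathbb C^T$ with $u(g)\Lambda=\Lambda u(g)$ for all $g\in G$ such that $R-\Lambda$ maps $\ell_2(T)$ boundedly into $\ell_2(T)$; (2) there is no linear map $\Lambda:\ell_1(T)\to\mathbb C^T$ with $u(g)\Lambda=\Lambda u(g)$ for all $g\in G$ such that $(L-\Lambda)x\in\ell_2(T)$ and $\|(L-\Lambda)x\|_2\le C\|x\|_2$ for all $x\in\ell_1(T)$.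
   Context: $e_t$ denotes the canonical basis vector at $t\in T$. (It is known that the commutators $u(g)R-Ru(g)$ and $u(g)L-Lu(g)$ extend to bounded operators on $\ell_2(T)$ of norm at most $2$, so $R$ and $L$ are linear $\mathrm{Aut}(T)$-centralizers $\ell_2(T)\curvearrowright\ell_2(T)$.) *)

From Stdlib Require Import Reals List Bool Arith ClassicalEpsilon.
Import ListNotations.
Open Scope R_scope.

Record Cplx := mkC { re : R; im : R }.
Definition C0 : Cplx := mkC 0 0.
Definition Cadd (z w : Cplx) : Cplx := mkC (re z + re w) (im z + im w).
Definition Csub (z w : Cplx) : Cplx := mkC (re z - re w) (im z - im w).
Definition Cmul (z w : Cplx) : Cplx :=
  mkC (re z * re w - im z * im w) (re z * im w + im z * re w).
Definition Cnorm2 (z : Cplx) : R := re z * re z + im z * im z.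
Definition Cabs (z : Cplx) : R := sqrt (Cnorm2 z).

(* A letter (i, b) stands for a_i if b = true and a_i^{-1} if b = false.
   A word is stored REVERSED: the head of the list is the LAST letter of
   the word.  So  t a_i^{+-1}  is  (i,b) :: t  and  hat t  is  tl t. *)
Definition letter := (nat * bool)%type.
Definition inv_letter (a : letter) : letter := (fst a, negb (snd a)).
Definition letter_eqb (a b : letter) : bool :=
  Nat.eqb (fst a) (fst b) && Bool.eqb (snd a) (snd b).

Fixpoint reducedb (w : list letter) : bool :=
  match w with
  | [] => true
  | a :: w' =>
      match w' with
      | [] => true
      | b :: _ => negb (letter_eqb b (inv_letter a)) && reducedb w'
      end
  end.

Definition T := { w : list letter | reducedb w = true }.
Definition word (t : T) : list letter := proj1_sig t.

Lemma reduced_tl (w : list letter) : reducedb w = true -> reducedb (tl w) = true.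
Proof.
  destruct w as [|a w]; simpl; auto.
  destruct w as [|b w]; simpl; auto.
  intros H; apply andb_prop in H; destruct H as [_ H]; exact H.
Qed.

Definition root : T := exist _ [] eq_refl.

(* hat t : delete the last letter (root is sent to itself, unused) *)
Definition hat (t : T) : T := exist _ (tl (word t)) (reduced_tl _ (proj2_sig t)).

Definition is_root (t : T) : bool :=
  match word t with [] => true | _ => false end.

(* adjacency in the Cayley graph: t ~ t a_i^{+-1}, i.e. one vertex is
   the parent (hat) of the other *)
Definition adj (s t : T) : Prop :=
  (word s <> [] /\ hat s = t) \/ (word t <> [] /\ hat t = s).

Definition is_aut (g ginv : T -> T) : Prop :=
  (forall t, g (ginv t) = t) /\ (forall t, ginv (g t) = t) /\
  (forall s t, adj s t <-> adj (g s) (g t)).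

Definition vec := T -> Cplx.
Definition vadd (x y : vec) : vec := fun t => Cadd (x t) (y t).
Definition vsub (x y : vec) : vec := fun t => Csub (x t) (y t).
Definition vscale (c : Cplx) (x : vec) : vec := fun t => Cmul c (x t).

(* u(g) x = (x(g^{-1} t))_t ; we pass the inverse ginv of g *)
Definition act (ginv : T -> T) (x : vec) : vec := fun t => x (ginv t).

Definition sumsq (x : vec) (l : list T) : R :=
  fold_right (fun t acc => Cnorm2 (x t) + acc) 0 l.
Definition sumabs (x : vec) (l : list T) : R :=
  fold_right (fun t acc => Cabs (x t) + acc) 0 l.

Definition in_l2 (x : vec) : Prop :=
  exists B, forall l, NoDup l -> sumsq x l <= B.
Definition in_l1 (x : vec) : Prop :=
  exists B, forall l, NoDup l -> sumabs x l <= B.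

(* ||y||_2 <= K ||x||_2  (unfolded: every bound B on ||x||_2^2 gives
   the bound K^2 B on ||y||_2^2) *)
Definition l2_bound (y x : vec) (K : R) : Prop :=
  forall B, (forall l, NoDup l -> sumsq x l <= B) ->
  forall l, NoDup l -> sumsq y l <= K ^ 2 * B.

Definition Rop (x : vec) : vec :=
  fun s => if is_root s then C0 else x (hat s).

Definition nth_letter (n : nat) : letter := (Nat.div2 n, Nat.odd n).

(* value of x at the n-th child  s (nth_letter n)  of s, or 0 if that
   word is not reduced (i.e. it is the parent of s) *)
Definition child_val (x : vec) (s : T) (n : nat) : Cplx :=
  let w := nth_letter n :: word s in
  match reducedb w as b return reducedb w = b -> Cplx with
  | true => fun H => x (exist _ w H)
  | false => fun _ => C0
  end eq_refl.

Definition series_value (f : nat -> R) : R :=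
  epsilon (inhabits 0) (fun r => infinite_sum f r).

(* L e_t = e_{hat t} (t <> root), L e_root = 0, extended to l_1:
   (L x)(s) = sum over the children t of s (hat t = s, t <> root) of x(t) *)
Definition Lop (x : vec) : vec :=
  fun s => mkC (series_value (fun n => re (child_val x s n)))
               (series_value (fun n => im (child_val x s n))).

(* Equivariance makes Λ rigid on the star of the root.  The automorphisms
   permuting the generators fix the root and permute its neighbours a_i, and
   an automorphism exchanges the root with a_0; hence c := (Λ e_∅)(a_i) does
   not depend on i, and (Λ e_{a_i})(∅) = c.  Since (R e_∅)(a_i) = 1 and
   (L e_∅)(a_i) = 0 for the infinitely many a_i, square-summability of the
   error on e_∅ forces c = 1 for R and c = 0 for L.  For
   x_N := e_{a_0} + ... + e_{a_(N-1)} one has ‖x_N‖₂² = N and, by additivity,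
   (Λ x_N)(∅) = N c, so the error at the root has real part -N for R and N
   for L, against the bound K √N. *)

From Stdlib Require Import Reals List.
From Stdlib Require Import Lra Lia Bool ClassicalEpsilon FunctionalExtensionality Eqdep_dec FinFun.
Import ListNotations.
Open Scope R_scope.

Lemma word_inj (s t : T) : word s = word t -> s = t.
Proof.
  destruct s as [w Hw], t as [v Hv]; simpl; intros E; subst v.
  f_equal. apply UIP_dec. exact bool_dec.
Qed.

Lemma letter_eqb_true (x y : letter) : letter_eqb x y = true <-> x = y.
Proof.
  destruct x as [i b], y as [j c]; unfold letter_eqb; simpl.
  rewrite andb_true_iff, Nat.eqb_eq, eqb_true_iff. split.
  - intros [-> ->]; reflexivity.
  - intros H; injection H; auto.
Qed.

Definition letter_dec : forall x y : letter, {x = y} + {x <> y}.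
Proof. decide equality; [apply bool_dec | apply Nat.eq_dec]. Defined.

Lemma reducedb_cons2 (x y : letter) (w : list letter) :
  reducedb (x :: y :: w) = negb (letter_eqb y (inv_letter x)) && reducedb (y :: w).
Proof. reflexivity. Qed.

Section LetterMap.
Variable f : letter -> letter.
Hypothesis f_inj : Injective f.
Hypothesis f_inv_letter : forall x, f (inv_letter x) = inv_letter (f x).

Lemma letter_eqb_map_inv x y :
  letter_eqb (f x) (inv_letter (f y)) = letter_eqb x (inv_letter y).
Proof.
  rewrite <- f_inv_letter. apply eq_true_iff_eq. rewrite !letter_eqb_true.
  split; [apply f_inj | intros ->; reflexivity].
Qed.

Lemma reducedb_map w : reducedb (map f w) = reducedb w.
Proof.
  induction w as [|x [|y w] IH]; [reflexivity | reflexivity|].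
  change (map f (x :: y :: w)) with (f x :: f y :: map f w).
  rewrite !reducedb_cons2, <- IH, letter_eqb_map_inv. reflexivity.
Qed.

End LetterMap.

Definition lift_word_map (f : list letter -> list letter)
  (f_red : forall w, reducedb w = true -> reducedb (f w) = true) (t : T) : T :=
  exist _ (f (word t)) (f_red _ (proj2_sig t)).

Lemma lift_word_involution_aut f f_red
  (f_invol : forall w, reducedb w = true -> f (f w) = w)
  (f_edge : forall x w, reducedb (x :: w) = true ->
     (exists m, f (x :: w) = m :: f w) \/ (exists m, f w = m :: f (x :: w))) :
  is_aut (lift_word_map f f_red) (lift_word_map f f_red).
Proof.
  set (F := lift_word_map f f_red).
  assert (F_invol : forall t, F (F t) = t).
  { intros t. apply word_inj, f_invol, (proj2_sig t). }
  assert (F_parent : forall s, word s <> [] -> adj (F s) (F (hat s))).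
  { intros s Hne. pose proof (proj2_sig s) as Hr; change (reducedb (word s) = true) in Hr.
    destruct (word s) as [|x w] eqn:Ew; [congruence|].
    assert (Es : word (F s) = f (x :: w)) by (change (f (word s) = f (x :: w)); rewrite Ew; reflexivity).
    assert (Eh : word (F (hat s)) = f w) by (change (f (tl (word s)) = f w); rewrite Ew; reflexivity).
    destruct (f_edge x w Hr) as [[m Hm]|[m Hm]]; [left|right]; split.
    - rewrite Es, Hm; discriminate.
    - apply word_inj. change (tl (word (F s)) = word (F (hat s))). rewrite Es, Eh, Hm; reflexivity.
    - rewrite Eh, Hm; discriminate.
    - apply word_inj. change (tl (word (F (hat s))) = word (F s)). rewrite Es, Eh, Hm; reflexivity. }
  assert (F_adj : forall s t, adj s t -> adj (F s) (F t)).
  { intros s t [[Hne <-]|[Hne <-]]; [|unfold adj; rewrite or_comm]; apply F_parent, Hne. }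
  split; [exact F_invol|]. split; [exact F_invol|].
  intros s t; split; [apply F_adj|].
  intros H. apply F_adj in H. rewrite !F_invol in H. exact H.
Qed.


Section LetterInvolution.
Variable f : letter -> letter.
Hypothesis f_invol : forall x, f (f x) = x.
Hypothesis f_inv_letter : forall x, f (inv_letter x) = inv_letter (f x).

Lemma map_involution_reduced w : reducedb w = true -> reducedb (map f w) = true.
Proof.
  rewrite reducedb_map; [trivial | | exact f_inv_letter].
  intros x y E. rewrite <- (f_invol x), E, f_invol. reflexivity.
Qed.

Definition letter_aut : T -> T := lift_word_map (map f) map_involution_reduced.

Lemma letter_aut_is_aut : is_aut letter_aut letter_aut.
Proof.
  apply lift_word_involution_aut.
  - intros w _. rewrite map_map, (map_ext _ (fun x => x) f_invol). apply map_id.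
  - intros x w _. left. exists (f x). reflexivity.
Qed.

End LetterInvolution.

Definition swap0 (i j : nat) : nat :=
  if Nat.eqb j 0 then i else if Nat.eqb j i then 0%nat else j.

Lemma swap0_invol i j : swap0 i (swap0 i j) = j.
Proof.
  unfold swap0.
  destruct (Nat.eqb_spec j 0) as [->|H0].
  - destruct (Nat.eqb_spec i 0) as [->|H1]; [reflexivity|].
    rewrite Nat.eqb_refl. reflexivity.
  - destruct (Nat.eqb_spec j i) as [->|H1].
    + rewrite Nat.eqb_refl. reflexivity.
    + apply Nat.eqb_neq in H0, H1. rewrite H0, H1. reflexivity.
Qed.

Definition swap0_letter (i : nat) (x : letter) : letter := (swap0 i (fst x), snd x).

Lemma swap0_letter_invol i x : swap0_letter i (swap0_letter i x) = x.
Proof. destruct x as [j b]; unfold swap0_letter; simpl; rewrite swap0_invol; reflexivity. Qed.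

Lemma swap0_letter_inv i x : swap0_letter i (inv_letter x) = inv_letter (swap0_letter i x).
Proof. reflexivity. Qed.

Definition swap_gen (i : nat) : T -> T :=
  letter_aut (swap0_letter i) (swap0_letter_invol i) (swap0_letter_inv i).

Lemma swap_gen_is_aut i : is_aut (swap_gen i) (swap_gen i).
Proof. apply letter_aut_is_aut. Qed.

Definition a0 : letter := (0%nat, true).

Definition invert_a0 (x : letter) : letter :=
  (fst x, if Nat.eqb (fst x) 0 then negb (snd x) else snd x).

Lemma invert_a0_invol x : invert_a0 (invert_a0 x) = x.
Proof.
  destruct x as [j b]; unfold invert_a0; simpl.
  destruct (Nat.eqb j 0); rewrite ?negb_involutive; reflexivity.
Qed.

Lemma invert_a0_inv x : invert_a0 (inv_letter x) = inv_letter (invert_a0 x).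
Proof. destruct x as [j b]; unfold invert_a0, inv_letter; simpl; destruct (Nat.eqb j 0); reflexivity. Qed.

(* [flip_word w] is the reduced form of a_0 · φ(w), where φ is the automorphism
   of F_∞ inverting a_0.  Since φ(a_0) = a_0⁻¹, this is an involution
   exchanging ∅ and a_0.  Recall that the head of the list is the last letter. *)
Fixpoint flip_word (w : list letter) : list letter :=
  match w with
  | [] => [a0]
  | x :: t => match t with
              | [] => if letter_eqb x a0 then [] else [invert_a0 x; a0]
              | _ => invert_a0 x :: flip_word t
              end
  end.

Lemma flip_word_cons2 x y w : flip_word (x :: y :: w) = invert_a0 x :: flip_word (y :: w).
Proof. reflexivity. Qed.

Lemma flip_word_nil_inv w : flip_word w = [] -> w = [a0].
Proof.
  destruct w as [|x [|y w]]; simpl; try discriminate.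
  destruct (letter_eqb x a0) eqn:E; [|discriminate].
  apply letter_eqb_true in E; subst; reflexivity.
Qed.

Lemma flip_word_reduced w : reducedb w = true -> reducedb (flip_word w) = true.
Proof.
  induction w as [|x [|y w] IH]; intros Hr; [reflexivity| |].
  - simpl. destruct (letter_eqb x a0) eqn:E; [reflexivity|].
    destruct x as [[|j] [|]]; simpl in *; try reflexivity; discriminate.
  - rewrite flip_word_cons2. rewrite reducedb_cons2 in Hr.
    apply andb_prop in Hr as [Hxy Hr]. specialize (IH Hr).
    destruct (flip_word (y :: w)) as [|z r] eqn:E; [reflexivity|].
    assert (Hz : z = invert_a0 y).
    { destruct w as [|u w].
      - simpl in E. destruct (letter_eqb y a0); [discriminate|]. injection E; auto.
      - simpl in E. injection E; auto. }
    subst z. rewrite reducedb_cons2, IH, letter_eqb_map_inv, Hxy; [reflexivity| |].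
    + intros a b E'. rewrite <- (invert_a0_invol a), E', invert_a0_invol. reflexivity.
    + exact invert_a0_inv.
Qed.

Lemma flip_word_invol w : reducedb w = true -> flip_word (flip_word w) = w.
Proof.
  induction w as [|x [|y w] IH]; intros Hr; [reflexivity| |].
  - simpl. destruct (letter_eqb x a0) eqn:E.
    + apply letter_eqb_true in E. subst. reflexivity.
    + simpl. rewrite invert_a0_invol. reflexivity.
  - rewrite flip_word_cons2. rewrite reducedb_cons2 in Hr.
    apply andb_prop in Hr as [Hxy Hr]. specialize (IH Hr).
    destruct (flip_word (y :: w)) as [|z r] eqn:E.
    + apply flip_word_nil_inv in E. injection E as -> ->.
      simpl. destruct (letter_eqb (invert_a0 x) a0) eqn:E3.
      * apply letter_eqb_true in E3. exfalso.
        assert (x = inv_letter a0) as ->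
          by (rewrite <- (invert_a0_invol x), E3; reflexivity).
        discriminate Hxy.
      * rewrite invert_a0_invol. reflexivity.
    + rewrite flip_word_cons2, invert_a0_invol, IH. reflexivity.
Qed.

Lemma flip_word_edge x w :
  (exists m, flip_word (x :: w) = m :: flip_word w) \/
  (exists m, flip_word w = m :: flip_word (x :: w)).
Proof.
  destruct w as [|y w].
  - simpl. destruct (letter_eqb x a0).
    + right. exists a0. reflexivity.
    + left. exists (invert_a0 x). reflexivity.
  - left. exists (invert_a0 x). reflexivity.
Qed.

Definition flip : T -> T := lift_word_map flip_word flip_word_reduced.

Lemma flip_is_aut : is_aut flip flip.
Proof. apply lift_word_involution_aut; [exact flip_word_invol | intros; apply flip_word_edge]. Qed.

Lemma Cplx_ext (z w : Cplx) : re z = re w -> im z = im w -> z = w.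
Proof. destruct z, w; simpl; intros -> ->; reflexivity. Qed.

Lemma Cnorm2_eq0 (z : Cplx) : Cnorm2 z = 0 -> z = C0.
Proof. unfold Cnorm2; intros H; apply Cplx_ext; simpl; nra. Qed.

Definition C1 : Cplx := mkC 1 0.
Definition indicator (p : T -> bool) : vec := fun s => if p s then C1 else C0.

Definition finitely_supported (p : T -> bool) (S : list T) : Prop :=
  forall s, p s = true -> In s S.

Lemma sumsq_indicator p l : sumsq (indicator p) l = INR (length (filter p l)).
Proof.
  induction l as [|t l IH]; [reflexivity|].
  unfold sumsq in *; simpl. rewrite IH. unfold indicator.
  destruct (p t); cbn -[INR]; [rewrite S_INR|]; unfold Cnorm2; simpl; ring.
Qed.

Lemma sumabs_indicator p l : sumabs (indicator p) l = INR (length (filter p l)).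
Proof.
  induction l as [|t l IH]; [reflexivity|].
  unfold sumabs in *; simpl. rewrite IH. unfold indicator, Cabs, Cnorm2.
  destruct (p t); cbn -[INR]; [rewrite S_INR|].
  - replace (1 * 1 + 0 * 0) with 1 by ring. rewrite sqrt_1. ring.
  - replace (0 * 0 + 0 * 0) with 0 by ring. rewrite sqrt_0. ring.
Qed.

Lemma length_filter_supported p S l :
  finitely_supported p S -> NoDup l -> (length (filter p l) <= length S)%nat.
Proof.
  intros HS Hl. apply NoDup_incl_length.
  - apply NoDup_filter, Hl.
  - intros s Hs. apply filter_In in Hs. apply HS; tauto.
Qed.

Lemma sumsq_indicator_le p S : finitely_supported p S ->
  forall l, NoDup l -> sumsq (indicator p) l <= INR (length S).
Proof.
  intros HS l Hl. rewrite sumsq_indicator. apply le_INR, length_filter_supported; assumption.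
Qed.

Lemma indicator_in_l2 p S : finitely_supported p S -> in_l2 (indicator p).
Proof. intros HS. exists (INR (length S)). apply sumsq_indicator_le, HS. Qed.

Lemma indicator_in_l1 p S : finitely_supported p S -> in_l1 (indicator p).
Proof.
  intros HS. exists (INR (length S)). intros l Hl. rewrite sumabs_indicator.
  apply le_INR, length_filter_supported; assumption.
Qed.

Definition is_word (w : list letter) (s : T) : bool :=
  if list_eq_dec letter_dec (word s) w then true else false.

Definition basis (t : T) : vec := indicator (is_word (word t)).

Lemma basis_supported t : finitely_supported (is_word (word t)) [t].
Proof.
  intros s. unfold is_word. destruct (list_eq_dec _ _ _) as [E|E]; [|discriminate].
  intros _. left. symmetry. apply word_inj, E.
Qed.

Lemma act_basis (F : T -> T) (HF : forall x, F (F x) = x) t : act F (basis t) = basis (F t).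
Proof.
  apply functional_extensionality. intros s. unfold act, basis, indicator, is_word.
  destruct (list_eq_dec letter_dec (word (F s)) (word t)) as [E1|E1],
    (list_eq_dec letter_dec (word s) (word (F t))) as [E2|E2]; try reflexivity; exfalso.
  - apply word_inj in E1. apply E2. rewrite <- E1, HF. reflexivity.
  - apply word_inj in E2. apply E1. rewrite E2, HF. reflexivity.
Qed.

Definition gen (i : nat) : T := exist _ [(i, true)] eq_refl.

Lemma gen_inj : Injective gen.
Proof. intros i j H. apply (f_equal word) in H. simpl in H. congruence. Qed.

Definition is_gen_below (N : nat) (s : T) : bool :=
  match word s with [(i, true)] => Nat.ltb i N | _ => false end.

Definition gens_sum (N : nat) : vec := indicator (is_gen_below N).

Lemma gens_sum_supported N : finitely_supported (is_gen_below N) (map gen (seq 0 N)).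
Proof.
  intros s. unfold is_gen_below. destruct (word s) as [|[i [|]] [|y w]] eqn:E; try discriminate.
  intros H. apply Nat.ltb_lt in H. apply in_map_iff. exists i. split.
  - apply word_inj. rewrite E. reflexivity.
  - apply in_seq. lia.
Qed.

Lemma gens_sum_0 : gens_sum 0 = vadd (gens_sum 0) (gens_sum 0).
Proof.
  apply functional_extensionality; intros s. unfold vadd, gens_sum, indicator, is_gen_below.
  destruct (word s) as [|[i [|]] [|y w]]; rewrite ?Nat.ltb_irrefl;
    try (destruct i; simpl); apply Cplx_ext; simpl; ring.
Qed.

Lemma gens_sum_S N : gens_sum (S N) = vadd (gens_sum N) (basis (gen N)).
Proof.
  apply functional_extensionality. intros s.
  unfold gens_sum, vadd, basis, indicator, is_gen_below, is_word. simpl.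
  destruct (list_eq_dec letter_dec (word s) [(N, true)]) as [E|E].
  - rewrite E, Nat.ltb_irrefl. replace (Nat.ltb N (S N)) with true by (symmetry; apply Nat.ltb_lt; lia).
    apply Cplx_ext; simpl; ring.
  - destruct (word s) as [|[i [|]] [|y w]]; try (apply Cplx_ext; simpl; ring).
    assert (i <> N) by (intros ->; apply E; reflexivity).
    destruct (Nat.ltb_spec i (S N)), (Nat.ltb_spec i N); try lia; apply Cplx_ext; simpl; ring.
Qed.

Lemma NoDup_gens N : NoDup (map gen (seq 0 N)).
Proof. apply Injective_map_NoDup; [apply gen_inj | apply seq_NoDup]. Qed.

Lemma sumsq_const_on_gens (v : vec) z : (forall i, v (gen i) = z) ->
  forall N k, sumsq v (map gen (seq k N)) = INR N * Cnorm2 z.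
Proof.
  intros Hv. induction N as [|N IH]; intros k; [unfold sumsq; simpl; ring|].
  unfold sumsq in *. simpl seq; simpl map; simpl fold_right. rewrite IH, Hv, S_INR. ring.
Qed.

Lemma l2_const_on_gens (v : vec) z : (forall i, v (gen i) = z) -> in_l2 v -> z = C0.
Proof.
  intros Hv [B HB]. apply Cnorm2_eq0.
  assert (Hq : 0 <= Cnorm2 z) by (unfold Cnorm2; nra).
  destruct (Rle_lt_or_eq_dec _ _ Hq) as [Hlt|Heq]; [exfalso|auto].
  destruct (INR_archimed (Cnorm2 z) B Hlt) as [N HN].
  specialize (HB _ (NoDup_gens N)). rewrite (sumsq_const_on_gens v z Hv) in HB. lra.
Qed.

Lemma swap_gen_root i : swap_gen i root = root.
Proof. apply word_inj. reflexivity. Qed.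

Lemma swap_gen_gen i : swap_gen i (gen i) = gen 0.
Proof.
  apply word_inj. simpl. unfold swap0_letter, swap0; simpl. rewrite Nat.eqb_refl.
  destruct (Nat.eqb_spec i 0) as [->|]; reflexivity.
Qed.

Lemma swap_gen_gen0 i : swap_gen i (gen 0) = gen i.
Proof. apply word_inj. reflexivity. Qed.

Lemma flip_root : flip root = gen 0.
Proof. apply word_inj. reflexivity. Qed.

Section Equivariance.
Variable D : vec -> Prop.
Hypothesis D_indicator : forall p S, finitely_supported p S -> D (indicator p).
Variable Lam : vec -> vec.
Hypothesis Lam_add : forall x y, D x -> D y -> Lam (vadd x y) = vadd (Lam x) (Lam y).
Hypothesis Lam_equivariant :
  forall g ginv, is_aut g ginv -> forall x, D x -> Lam (act ginv x) = act ginv (Lam x).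

Lemma D_basis t : D (basis t).
Proof. exact (D_indicator _ _ (basis_supported t)). Qed.

Lemma Lam_basis_aut F t : is_aut F F -> Lam (basis (F t)) = act F (Lam (basis t)).
Proof.
  intros HF. rewrite <- act_basis by apply (proj1 HF).
  apply (Lam_equivariant F F HF), D_basis.
Qed.

Lemma Lam_root_at_gen i : Lam (basis root) (gen i) = Lam (basis root) (gen 0).
Proof.
  rewrite <- (swap_gen_root i) at 1.
  rewrite (Lam_basis_aut _ _ (swap_gen_is_aut i)). unfold act. rewrite swap_gen_gen. reflexivity.
Qed.

Lemma Lam_gen_at_root i : Lam (basis (gen i)) root = Lam (basis root) (gen 0).
Proof.
  rewrite <- swap_gen_gen0, (Lam_basis_aut _ _ (swap_gen_is_aut i)). unfold act.
  rewrite swap_gen_root, <- flip_root, (Lam_basis_aut _ _ flip_is_aut). reflexivity.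
Qed.

Lemma Lam_gens_sum_root N :
  re (Lam (gens_sum N) root) = INR N * re (Lam (basis root) (gen 0)).
Proof.
  assert (D_gens_sum : forall n, D (gens_sum n))
    by (intros n; exact (D_indicator _ _ (gens_sum_supported n))).
  induction N as [|N IH].
  - pose proof (f_equal (fun v => re (v root)) (Lam_add _ _ (D_gens_sum 0%nat) (D_gens_sum 0%nat))) as H.
    rewrite <- gens_sum_0 in H. simpl in H |- *. lra.
  - rewrite gens_sum_S, Lam_add by (apply D_gens_sum || apply D_basis).
    unfold vadd, Cadd. cbn [re]. rewrite IH, Lam_gen_at_root, S_INR. ring.
Qed.

Lemma no_l2_approximation (A : vec -> vec) (a : Cplx) (b : R) :
  (forall i, A (basis root) (gen i) = a) ->
  (forall N, re (A (gens_sum N) root) = INR N * b) -> b <> re a ->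
  forall K, ~ (forall x, D x ->
    in_l2 (vsub (A x) (Lam x)) /\ l2_bound (vsub (A x) (Lam x)) x K).
Proof.
  intros HA HAN Hab K HK.
  set (c := Lam (basis root) (gen 0)).
  assert (Hc : re c = re a).
  { assert (Hv : forall i, vsub (A (basis root)) (Lam (basis root)) (gen i) = Csub a c).
    { intros i. unfold vsub. rewrite HA, Lam_root_at_gen. reflexivity. }
    pose proof (l2_const_on_gens _ _ Hv (proj1 (HK _ (D_basis root)))) as H0.
    apply (f_equal re) in H0. simpl in H0. lra. }
  assert (Herr : forall N, INR N * INR N * ((b - re a) * (b - re a))
                           <= K ^ 2 * INR N).
  { intros N.
    destruct (HK _ (D_indicator _ _ (gens_sum_supported N))) as [_ Hb].
    specialize (Hb _ (sumsq_indicator_le _ _ (gens_sum_supported N)) [root]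
                  (NoDup_cons _ (@in_nil _ root) (NoDup_nil _))).
    rewrite length_map, length_seq in Hb. unfold sumsq, vsub, Cnorm2 in Hb. simpl in Hb.
    fold (gens_sum N) in Hb.
    rewrite HAN, Lam_gens_sum_root in Hb. fold c in Hb. rewrite Hc in Hb.
    set (u := im _ - im _) in Hb. pose proof (Rle_0_sqr u). unfold Rsqr in *. simpl in Hb. nra. }
  assert (Hd : (b - re a) * (b - re a) > 0).
  { assert (Hne : b - re a <> 0) by lra.
    pose proof (Rsqr_pos_lt _ Hne). unfold Rsqr in *. lra. }
  destruct (INR_archimed _ (K ^ 2) Hd) as [N HN].
  specialize (Herr N). pose proof (pow2_ge_0 K). nra.
Qed.

End Equivariance.

Lemma Rop_basis_root_at_gen i : Rop (basis root) (gen i) = C1.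
Proof. reflexivity. Qed.

Lemma Rop_gens_sum_root N : re (Rop (gens_sum N) root) = INR N * 0.
Proof. simpl. ring. Qed.

Lemma series_value_eq f r : infinite_sum f r -> series_value f = r.
Proof.
  intros H. unfold series_value.
  exact (uniqueness_sum _ _ _ (epsilon_spec (inhabits 0) _ (ex_intro _ r H)) H).
Qed.

Lemma infinite_sum_stationary f r M :
  (forall n, (n >= M)%nat -> sum_f_R0 f n = r) -> infinite_sum f r.
Proof.
  intros H eps He. exists M. intros n Hn. rewrite H by lia. unfold Rdist.
  rewrite Rminus_diag, Rabs_R0. lra.
Qed.

Lemma sum_f_R0_zero f : (forall n, f n = 0) -> forall m, sum_f_R0 f m = 0.
Proof. intros H m. induction m; simpl; rewrite ?IHm, H; ring. Qed.

Lemma child_val_reduced x s n (H : reducedb (nth_letter n :: word s) = true) :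
  child_val x s n = x (exist _ _ H).
Proof.
  unfold child_val.
  generalize (@eq_refl bool (reducedb (nth_letter n :: word s))).
  generalize (reducedb (nth_letter n :: word s)) at 2 3.
  intros b; destruct b; intros E; [f_equal; apply word_inj; reflexivity | congruence].
Qed.

Lemma child_val_cases x s n :
  child_val x s n = C0 \/ exists H, child_val x s n = x (exist _ (nth_letter n :: word s) H).
Proof.
  destruct (reducedb (nth_letter n :: word s)) eqn:E.
  - right. exists E. apply child_val_reduced.
  - left. unfold child_val.
    generalize (@eq_refl bool (reducedb (nth_letter n :: word s))).
    generalize (reducedb (nth_letter n :: word s)) at 2 3.
    intros b; destruct b; intros E'; [congruence | reflexivity].
Qed.

Lemma Lop_basis_root_at_gen i : Lop (basis root) (gen i) = C0.
Proof.
  assert (Z : forall n, child_val (basis root) (gen i) n = C0).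
  { intros n. destruct (child_val_cases (basis root) (gen i) n) as [H|[H' H]]; rewrite H;
      [reflexivity|].
    unfold basis, indicator, is_word. destruct (list_eq_dec _ _ _); [discriminate | reflexivity]. }
  unfold Lop. rewrite !(series_value_eq _ 0); [reflexivity | |];
    apply (infinite_sum_stationary _ _ 0); intros n _; apply sum_f_R0_zero;
    intros k; rewrite Z; reflexivity.
Qed.

(* The letter with index n is a_(n/2) when n is odd; only these children of
   the root contribute to [Lop (gens_sum N) root]. *)
Definition odd_below (N n : nat) : R := if Nat.odd n && Nat.ltb (Nat.div2 n) N then 1 else 0.

Definition delta (k n : nat) : R := if Nat.eqb n k then 1 else 0.

Lemma sum_delta k m : sum_f_R0 (delta k) m = if Nat.leb k m then 1 else 0.
Proof.
  induction m as [|m IH]; cbn [sum_f_R0].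
  - unfold delta. destruct k; reflexivity.
  - rewrite IH. unfold delta.
    destruct (Nat.leb_spec k m), (Nat.eqb_spec (S m) k), (Nat.leb_spec k (S m)); try lia; ring.
Qed.

Lemma odd_below_S N n : odd_below (S N) n = odd_below N n + delta (2 * N + 1) n.
Proof.
  unfold odd_below, delta. pose proof (Nat.div2_odd n) as Hd.
  destruct (Nat.odd n); simpl in Hd.
  - destruct (Nat.ltb_spec (Nat.div2 n) (S N)), (Nat.ltb_spec (Nat.div2 n) N),
      (Nat.eqb_spec n (2 * N + 1)); simpl; try lia; ring.
  - destruct (Nat.eqb_spec n (2 * N + 1)); simpl; try lia; ring.
Qed.

Lemma sum_odd_below N m : (m >= 2 * N)%nat -> sum_f_R0 (odd_below N) m = INR N.
Proof.
  revert m. induction N as [|N IH]; intros m Hm.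
  - apply sum_f_R0_zero. intros n. unfold odd_below. rewrite andb_false_r. reflexivity.
  - rewrite (sum_eq _ _ _ (fun n _ => odd_below_S N n)), sum_plus, IH, sum_delta by lia.
    destruct (Nat.leb_spec (2 * N + 1) m); [|lia]. rewrite S_INR. ring.
Qed.

Lemma Lop_gens_sum_root N : re (Lop (gens_sum N) root) = INR N * 1.
Proof.
  unfold Lop. cbn [re]. rewrite Rmult_1_r. apply series_value_eq.
  apply (infinite_sum_stationary _ _ (2 * N)). intros m Hm.
  rewrite <- (sum_odd_below N m Hm). apply sum_eq. intros k _.
  rewrite (child_val_reduced _ root k eq_refl).
  unfold odd_below, gens_sum, indicator, is_gen_below; simpl.
  destruct (Nat.odd k), (Nat.ltb _ N); reflexivity.
Qed.

Theorem mainTheorem5 :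
  (* (1) *)
  ~ (exists Lam : vec -> vec,
       (forall x y, in_l2 x -> in_l2 y -> Lam (vadd x y) = vadd (Lam x) (Lam y)) /\
       (forall (c : Cplx) x, in_l2 x -> Lam (vscale c x) = vscale c (Lam x)) /\
       (forall g ginv, is_aut g ginv ->
          forall x, in_l2 x -> Lam (act ginv x) = act ginv (Lam x)) /\
       (exists K : R, forall x, in_l2 x ->
          in_l2 (vsub (Rop x) (Lam x)) /\ l2_bound (vsub (Rop x) (Lam x)) x K))
  /\
  (* (2) *)
  ~ (exists Lam : vec -> vec,
       (forall x y, in_l1 x -> in_l1 y -> Lam (vadd x y) = vadd (Lam x) (Lam y)) /\
       (forall (c : Cplx) x, in_l1 x -> Lam (vscale c x) = vscale c (Lam x)) /\
       (forall g ginv, is_aut g ginv ->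
          forall x, in_l1 x -> Lam (act ginv x) = act ginv (Lam x)) /\
       (exists K : R, forall x, in_l1 x ->
          in_l2 (vsub (Lop x) (Lam x)) /\ l2_bound (vsub (Lop x) (Lam x)) x K)).
Proof.
  split; intros [Lam [Hadd [_ [Hequiv [K HK]]]]].
  - apply (no_l2_approximation in_l2 indicator_in_l2 Lam Hadd Hequiv Rop C1 0
             Rop_basis_root_at_gen Rop_gens_sum_root) with K; [simpl; lra | exact HK].
  - apply (no_l2_approximation in_l1 indicator_in_l1 Lam Hadd Hequiv Lop C0 1
             Lop_basis_root_at_gen Lop_gens_sum_root) with K; [simpl; lra | exact HK].
Qed.
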